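(* Suppose Assumption 1 holds, $f$ is convex, $F$ is $\mu$-optimal-set-strongly convex for some $\mu>0$, every $d^k$ computed in Algorithm 2 satisfies the $\eta$-inexactness condition for a fixed $\eta\in[0,1)$, and for all $k$ the initial matrices satisfy $m_0I\preceq H^0_k\preceq M_0I$ with $M_0>0$, $m_0\le M_0$ (and $m_0>0$ for Variant 1). Then for all $k=0,1,2,\dots$, with $H_k$ the final (accepted) matrix, $$\frac{F(x^{k+1})-F^*}{F(x^k)-F^*}\le1-\gamma\frac{\mu(1-\eta)}{\mu+\|H_k\|},$$ and the right-hand side is at most $1-\gamma\frac{\mu(1-\eta)}{\mu+\tilde M_1(\eta)}$ for Variant 1 and at most $1-\gamma\frac{\mu(1-\eta)}{\mu+\tilde M_2(\eta)}$ for Variant 2. Moreover, for every $k$ with $F(x^k)-F^*\ge(x^k-P_\Omega(x^k))^TH_k(x^k-P_\Omega(x^k))$ (and the final $H_k\succeq0$), one has $\frac{F(x^{k+1})-F^*}{F(x^k)-F^*}\le1-\frac{(1-\eta)\gamma}{2}$.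
   Context: Problem setting: $F(x)=f(x)+\psi(x)$ on $\mathbb{R}^n$, $F^*=\inf F$, $\Omega=\{x:F(x)=F^*\}$, $P_\Omega$ the Euclidean projection onto $\Omega$, $\|\cdot\|$ the Euclidean / spectral norm. Assumption 1: $f$ is differentiable with $L$-Lipschitz continuous gradient ($L>0$); $\psi:\mathbb{R}^n\to\mathbb{R}\cup\{+\infty\}$ is convex, proper and closed; $F$ is bounded below; $\Omega$ is nonempty. $F$ is $\mu$-optimal-set-strongly convex ($\mu\ge0$) if for all $x$ and all $\lambda\in[0,1]$: $F(\lambda x+(1-\lambda)P_\Omega(x))\le\lambda F(x)+(1-\lambda)F^*-\frac{\mu\lambda(1-\lambda)}2\|x-P_\Omega(x)\|^2$. For $x\in\mathbb{R}^n$ and symmetric $H$, $Q^x_H(d)\coloneqq\nabla f(x)^Td+\frac12d^THd+\psi(x+d)-\psi(x)$, $Q^*=\inf_dQ^x_H(d)$; $d$ satisfies the $\eta$-inexactness condition if $Q^x_H(d)\le(1-\eta)Q^*$. Algorithm 2: given $\beta\in(0,1)$, $\gamma\in(0,1]$, $x^0$, fixed $\eta\in[0,1)$; for each $k$: choose symmetric $H^0_k$ (in Variant 1, $H^0_k\succ0$); set $\alpha_k\leftarrow1$, $H_k\leftarrow H^0_k$, compute $d^k$ satisfying the $\eta$-inexactness condition for $Q^{x^k}_{H_k}$; while $F(x^k)-F(x^k+d^k)\ge-\gamma Q^{x^k}_{H_k}(d^k)\ge0$ fails: Variant 1 sets $\alpha_k\leftarrow\beta\alpha_k$, $H_k\leftarrow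 H^0_k/\alpha_k$; Variant 2 sets $H_k\leftarrow H^0_k+\alpha_k^{-1}I$, then $\alpha_k\leftarrow\beta\alpha_k$; then $d^k$ is recomputed satisfying the $\eta$-inexactness condition. Finally $x^{k+1}=x^k+d^k$; ''final $H_k$'' is the accepted matrix. Constants: $\tilde M_2(\eta)\coloneqq M_0+\max\{1,\frac1\beta(\frac{L(1+\sqrt\eta)}{2-\gamma(1-\sqrt\eta)}-m_0)\}$, $\tilde M_1(\eta)\coloneqq M_0\max\{1,\frac{L(1+\sqrt\eta)}{\beta(2-\gamma(1-\sqrt\eta))m_0}\}$. *)

From Stdlib Require Import Reals ClassicalEpsilon.
From mathcomp Require Import ssreflect ssrfun ssrbool eqtype ssrnat fintype bigop.
Open Scope R_scope.

Definition vec (n : nat) := 'I_n -> R.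
Definition mat (n : nat) := 'I_n -> 'I_n -> R.

Definition vadd {n} (u v : vec n) : vec n := fun i => u i + v i.
Definition vsub {n} (u v : vec n) : vec n := fun i => u i - v i.
Definition vscale {n} (a : R) (u : vec n) : vec n := fun i => a * u i.

Definition dot {n} (u v : vec n) : R := \big[Rplus/0]_(i < n) (u i * v i).
Definition vnorm {n} (u : vec n) : R := sqrt (dot u u).

Definition mv {n} (H : mat n) (v : vec n) : vec n :=
  fun i => \big[Rplus/0]_(j < n) (H i j * v j).
Definition quad {n} (H : mat n) (v : vec n) : R := dot v (mv H v).
Definition msym {n} (H : mat n) : Prop := forall i j, H i j = H j i.
Definition idmat (n : nat) : mat n := fun i j => if i == j then 1 else 0.
Definition madd {n} (A B : mat n) : mat n := fun i j => A i j + B i j.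
Definition mscale {n} (a : R) (A : mat n) : mat n := fun i j => a * A i j.

Definition loewner_le {n} (A B : mat n) : Prop :=
  forall v, quad A v <= quad B v.
Definition psd {n} (H : mat n) : Prop := forall v, 0 <= quad H v.
Definition pd {n} (H : mat n) : Prop := forall v, v <> (fun _ => 0) -> 0 < quad H v.

Definition opnorm {n} (H : mat n) : R :=
  epsilon (inhabits 0)
    (fun r => is_lub (fun y => exists v : vec n, vnorm v <= 1 /\ y = vnorm (mv H v)) r).

Definition is_inf (S : R -> Prop) (q : R) : Prop :=
  (forall y, S y -> q <= y) /\ (forall b, (forall y, S y -> b <= y) -> b <= q).

Definition has_gradient {n} (f : vec n -> R) (g : vec n -> vec n) : Prop :=
  forall x eps, 0 < eps -> exists delta, 0 < delta /\
    forall h, 0 < vnorm h < delta ->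
      Rabs (f (vadd x h) - f x - dot (g x) h) <= eps * vnorm h.

Definition lipschitz {n} (L : R) (g : vec n -> vec n) : Prop :=
  forall x y, vnorm (vsub (g x) (g y)) <= L * vnorm (vsub x y).

Definition convex_fun {n} (f : vec n -> R) : Prop :=
  forall x y lam, 0 <= lam <= 1 ->
    f (vadd (vscale lam x) (vscale (1 - lam) y)) <= lam * f x + (1 - lam) * f y.

(* An extended-real-valued psi : R^n -> R U {+oo} is represented by its
   effective domain dom and its (finite) values psi on dom; psi = +oo off dom. *)
Definition convex_ext {n} (dom : vec n -> Prop) (psi : vec n -> R) : Prop :=
  forall x y lam, dom x -> dom y -> 0 <= lam <= 1 ->
    let z := vadd (vscale lam x) (vscale (1 - lam) y) in
    dom z /\ psi z <= lam * psi x + (1 - lam) * psi y.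
Definition proper_ext {n} (dom : vec n -> Prop) : Prop := exists x, dom x.
(* closed = lower semicontinuous as an extended-real-valued function *)
Definition closed_ext {n} (dom : vec n -> Prop) (psi : vec n -> R) : Prop :=
  forall x t, (dom x -> t < psi x) ->
    exists delta, 0 < delta /\
      forall y, vnorm (vsub y x) < delta -> dom y -> t < psi y.

(* Q^x_H(d) (meaningful when x, x+d are in dom psi) *)
Definition Qmodel {n} (g : vec n -> vec n) (psi : vec n -> R)
    (x : vec n) (H : mat n) (d : vec n) : R :=
  dot (g x) d + / 2 * quad H d + psi (vadd x d) - psi x.

(* eta-inexactness: Q(d) <= (1 - eta) Q^*, Q^* = inf_d Q^x_H(d) (Q = +oo off dom) *)
Definition eta_inexact {n} (dom : vec n -> Prop) (g : vec n -> vec n)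
    (psi : vec n -> R) (eta : R) (x : vec n) (H : mat n) (d : vec n) : Prop :=
  dom (vadd x d) /\
  exists Qs, is_inf (fun y => exists d', dom (vadd x d') /\ y = Qmodel g psi x H d') Qs
          /\ Qmodel g psi x H d <= (1 - eta) * Qs.

Definition accepted {n} (f : vec n -> R) (g : vec n -> vec n) (psi : vec n -> R)
    (gamma : R) (x : vec n) (H : mat n) (d : vec n) : Prop :=
  (f x + psi x) - (f (vadd x d) + psi (vadd x d)) >= - gamma * Qmodel g psi x H d
  /\ - gamma * Qmodel g psi x H d >= 0.

Inductive variant := Variant1 | Variant2.

(* matrix used at the i-th trial (i = number of failed tests so far) *)
Definition trial_mat {n} (v : variant) (beta : R) (H0 : mat n) (i : nat) : mat n :=
  match v with
  | Variant1 => mscale (/ (beta ^ i)) H0                      (* H0 / alpha, alpha = beta^i *)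
  | Variant2 => match i with
                | O => H0
                | S i' => madd H0 (mscale (/ (beta ^ i')) (idmat n)) (* H0 + alpha^{-1} I *)
                end
  end.

Definition Mtilde2 (M0 m0 L beta gamma eta : R) : R :=
  M0 + Rmax 1 (/ beta * (L * (1 + sqrt eta) / (2 - gamma * (1 - sqrt eta)) - m0)).
Definition Mtilde1 (M0 m0 L beta gamma eta : R) : R :=
  M0 * Rmax 1 (L * (1 + sqrt eta) / (beta * (2 - gamma * (1 - sqrt eta)) * m0)).

(* An accepted step satisfies F(x) - F(x + d) >= -gamma Q(d) >= -gamma (1 - eta) Q^*, so a
   linear rate follows from any bound Q^* <= -a [F(x) - F^*]. Testing the model at
   lam (P x - x), convexity of f and optimal-set strong convexity of F give
   a = mu / (mu + ||H||) for lam = mu / (mu + ||H||), and a = 1/2 for lam = 1 when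
   F(x) - F^* dominates the H-seminorm of x - P x.
   For the uniform rates: eta-inexactness tested on the segment [0, d] bounds c |d|^2 by
   -Q(d) when H >= c I, so by the descent lemma a trial matrix passes the test as soon as
   c >= L (1 + sqrt eta) / (2 - gamma (1 - sqrt eta)). Every rejected trial therefore has a
   smaller lower spectral bound, and the accepted matrix, one backtracking step further,
   has norm at most M~1(eta) resp. M~2(eta). *)

From HB Require Import structures.
From Stdlib Require Import Reals ClassicalEpsilon Lra Psatz FunctionalExtensionality.
Set Warnings "-notation-overridden -redundant-canonical-projection".
From mathcomp Require Import ssreflect ssrfun ssrbool eqtype ssrnat seq fintype bigop.

Open Scope R_scope.

HB.instance Definition _ := Monoid.isComLaw.Build R 0 Rplus
  (fun a b c => esym (Rplus_assoc a b c)) Rplus_comm Rplus_0_l.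
HB.instance Definition _ := Monoid.isComLaw.Build R 1 Rmult
  (fun a b c => esym (Rmult_assoc a b c)) Rmult_comm Rmult_1_l.
HB.instance Definition _ := Monoid.isMulLaw.Build R 0 Rmult Rmult_0_l Rmult_0_r.
HB.instance Definition _ := Monoid.isAddLaw.Build R Rmult Rplus
  Rmult_plus_distr_r Rmult_plus_distr_l.

Lemma sumR_ge0 (I : Type) (r : seq I) (P : pred I) (F : I -> R) :
  (forall i, P i -> 0 <= F i) -> 0 <= \big[Rplus/0]_(i <- r | P i) F i.
Proof.
by move=> F0; apply: (big_ind (fun x => 0 <= x)) => [|a b|i Pi]; [lra|lra|exact: F0].
Qed.

Lemma sumR_term_le n (F : 'I_n -> R) i : (forall j, 0 <= F j) -> F i <= \big[Rplus/0]_(j < n) F j.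
Proof.
move=> F0; rewrite (bigD1 i) //=.
rewrite -[X in X <= _]Rplus_0_r; apply: Rplus_le_compat_l; exact: sumR_ge0.
Qed.

Lemma sumR_delta n (v : 'I_n -> R) i :
  \big[Rplus/0]_(j < n) ((if i == j then 1 else 0) * v j) = v i.
Proof.
rewrite (bigD1 i) //= eqxx big1; first ring.
by move=> j /negbTE; rewrite eq_sym => ->; ring.
Qed.

Section Vectors.
Context {n : nat}.
Implicit Types u v w : vec n.

Lemma dot_comm u v : dot u v = dot v u.
Proof. by apply: eq_bigr => i _; rewrite Rmult_comm. Qed.

Lemma dot_addl u v w : dot (vadd u v) w = dot u w + dot v w.
Proof. by rewrite /dot -big_split; apply: eq_bigr => i _ /=; rewrite /vadd; ring. Qed.

Lemma dot_scalel c u w : dot (vscale c u) w = c * dot u w.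
Proof. by rewrite /dot big_distrr /=; apply: eq_bigr => i _; rewrite /vscale; ring. Qed.

Lemma dot_subl u v w : dot (vsub u v) w = dot u w - dot v w.
Proof.
have -> : vsub u v = vadd u (vscale (-1) v).
  by apply: functional_extensionality => i; rewrite /vsub /vadd /vscale; ring.
by rewrite dot_addl dot_scalel; ring.
Qed.

Lemma dot_addr u v w : dot w (vadd u v) = dot w u + dot w v.
Proof. by rewrite dot_comm dot_addl !(dot_comm w). Qed.

Lemma dot_subr u v w : dot w (vsub u v) = dot w u - dot w v.
Proof. by rewrite dot_comm dot_subl !(dot_comm w). Qed.

Lemma dot_scaler c u w : dot w (vscale c u) = c * dot w u.
Proof. by rewrite dot_comm dot_scalel dot_comm. Qed.

Lemma dot0r u : dot u (fun _ => 0) = 0.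
Proof. by rewrite /dot big1 // => i _; ring. Qed.

Lemma dot_self_ge0 u : 0 <= dot u u.
Proof. by apply: sumR_ge0 => i _; nra. Qed.

Lemma dot_self_eq0 u : dot u u = 0 -> u = (fun _ => 0).
Proof.
move=> u0; apply: functional_extensionality => i.
have := sumR_term_le _ (fun j => u j * u j) i (fun j => ltac:(nra)).
by rewrite -/(dot u u) u0 => ?; nra.
Qed.

Lemma vnorm_ge0 u : 0 <= vnorm u.
Proof. exact: sqrt_pos. Qed.

Lemma vnorm_sq u : vnorm u * vnorm u = dot u u.
Proof. by rewrite /vnorm sqrt_sqrt //; apply: dot_self_ge0. Qed.

Lemma vnorm_eq0 u : vnorm u = 0 -> u = (fun _ => 0).
Proof. by move=> u0; apply: dot_self_eq0; rewrite -vnorm_sq u0; ring. Qed.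

Lemma vnorm0 : vnorm (fun _ : 'I_n => 0) = 0.
Proof. by rewrite /vnorm dot0r sqrt_0. Qed.

Lemma vnorm_scale c u : vnorm (vscale c u) = Rabs c * vnorm u.
Proof.
rewrite /vnorm dot_scalel dot_scaler -Rmult_assoc sqrt_mult; last exact: dot_self_ge0.
  by rewrite -sqrt_Rsqr_abs.
nra.
Qed.

Lemma vadd0 u : vadd u (fun _ => 0) = u.
Proof. by apply: functional_extensionality => i; rewrite /vadd; ring. Qed.

(* Expand |a u - b v|^2 >= 0 with a = |v| and b = |u|. *)
Lemma cauchy_schwarz u v : dot u v <= vnorm u * vnorm v.
Proof.
have [v0|v_neq0] := Req_dec (vnorm v) 0.
  by rewrite (vnorm_eq0 v v0) dot0r vnorm0; lra.
have [u0|u_neq0] := Req_dec (vnorm u) 0.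
  by rewrite (vnorm_eq0 u u0) dot_comm dot0r vnorm0; lra.
have := dot_self_ge0 (vsub (vscale (vnorm v) u) (vscale (vnorm u) v)).
rewrite !dot_subl !dot_subr !dot_scalel !dot_scaler (dot_comm v u) -!vnorm_sq.
have : 0 < vnorm u * vnorm v.
  by have := vnorm_ge0 u; have := vnorm_ge0 v; move=> *; apply: Rmult_lt_0_compat; lra.
nra.
Qed.

End Vectors.

Section Matrices.
Context {n : nat}.
Implicit Types (H A B : mat n) (u v : vec n).

Lemma mv_add H u v : mv H (vadd u v) = vadd (mv H u) (mv H v).
Proof.
apply: functional_extensionality => i; rewrite /mv /vadd -big_split /=.
by apply: eq_bigr => j _; ring.
Qed.

Lemma mv_scale H c v : mv H (vscale c v) = vscale c (mv H v).
Proof.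
apply: functional_extensionality => i; rewrite /mv /vscale big_distrr /=.
by apply: eq_bigr => j _; ring.
Qed.

Lemma mv_sub H u v : mv H (vsub u v) = vsub (mv H u) (mv H v).
Proof.
have vsubE w w' : vsub w w' = vadd w (vscale (-1) w').
  by apply: functional_extensionality => i; rewrite /vsub /vadd /vscale; ring.
by rewrite !vsubE mv_add mv_scale.
Qed.

Lemma quad_scale H c v : quad H (vscale c v) = c * c * quad H v.
Proof. by rewrite /quad mv_scale dot_scalel dot_scaler; ring. Qed.

Lemma quad_mscale c H v : quad (mscale c H) v = c * quad H v.
Proof.
rewrite /quad -dot_scaler; congr dot; apply: functional_extensionality => i.
by rewrite /mv /vscale /mscale big_distrr /=; apply: eq_bigr => j _; ring.
Qed.

Lemma quad_madd A B v : quad (madd A B) v = quad A v + quad B v.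
Proof.
rewrite /quad -dot_addr; congr dot; apply: functional_extensionality => i.
by rewrite /mv /vadd /madd -big_split /=; apply: eq_bigr => j _; ring.
Qed.

Lemma quad_idmat v : quad (idmat n) v = dot v v.
Proof.
rewrite /quad; congr dot; apply: functional_extensionality => i.
by rewrite /mv /idmat sumR_delta.
Qed.

Lemma msym_mscale c H : msym H -> msym (mscale c H).
Proof. by move=> sH i j; rewrite /mscale sH. Qed.

Lemma msym_madd A B : msym A -> msym B -> msym (madd A B).
Proof. by move=> sA sB i j; rewrite /madd sA sB. Qed.

Lemma msym_idmat : msym (idmat n).
Proof. by move=> i j; rewrite /idmat eq_sym. Qed.

Lemma dot_mv_sym H u v : msym H -> dot u (mv H v) = dot v (mv H u).
Proof.
move=> sH; rewrite /dot /mv.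
under eq_bigr => i _ do rewrite big_distrr /=.
under [RHS]eq_bigr => i _ do rewrite big_distrr /=.
rewrite exchange_big /=; apply: eq_bigr => i _; apply: eq_bigr => j _.
by rewrite sH; ring.
Qed.

Lemma quad_add_sym H u v : msym H ->
  quad H (vadd u v) = quad H u + 2 * dot u (mv H v) + quad H v.
Proof. by move=> sH; rewrite /quad mv_add !dot_addl !dot_addr (dot_mv_sym H v u sH); ring. Qed.

Lemma quad_sub_sym H u v : msym H ->
  quad H (vsub u v) = quad H u - 2 * dot u (mv H v) + quad H v.
Proof. by move=> sH; rewrite /quad mv_sub !dot_subl !dot_subr (dot_mv_sym H v u sH); ring. Qed.

End Matrices.

Section OperatorNorm.
Context {n : nat}.
Variables (H : mat n) (K : R).
Hypotheses (sH : msym H) (K_gt0 : 0 < K)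
  (quad_bounded : forall v, Rabs (quad H v) <= K * dot v v).

Lemma dot_mv_polar_le u v : 4 * dot u (mv H v) <= K * (2 * dot u u + 2 * dot v v).
Proof.
have := quad_bounded (vadd u v); have := quad_bounded (vsub u v).
rewrite quad_add_sym // quad_sub_sym //.
rewrite !dot_subl !dot_subr !dot_addl !dot_addr (dot_comm v u).
by split_Rabs; lra.
Qed.

Lemma mv_vnorm_le v : vnorm (mv H v) <= K * vnorm v.
Proof.
set w := mv H v.
have ww_le : dot w w <= K * K * dot v v.
  have := dot_mv_polar_le (vscale (/ K) w) v.
  rewrite -/w dot_scalel !dot_scaler dot_scalel.
  have e : K * (2 * (/ K * (/ K * dot w w)) + 2 * dot v v)
           = 2 * (/ K * dot w w) + K * (2 * dot v v) by field; lra.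
  rewrite e => h.
  have : / K * dot w w <= K * dot v v by lra.
  move=> /(Rmult_le_compat_l K _ _ (Rlt_le _ _ K_gt0)).
  have -> : K * (/ K * dot w w) = dot w w by field; lra.
  lra.
rewrite -!vnorm_sq in ww_le.
have := vnorm_ge0 w; have : 0 <= K * vnorm v by have := vnorm_ge0 v; nra.
nra.
Qed.

Let unit_image y := exists v : vec n, vnorm v <= 1 /\ y = vnorm (mv H v).

Lemma unit_image0 : unit_image (vnorm (mv H (fun _ => 0))).
Proof. by exists (fun _ => 0); split=> //; rewrite vnorm0; lra. Qed.

Lemma opnorm_is_lub : is_lub unit_image (opnorm H).
Proof.
have ub : is_upper_bound unit_image K.
  move=> y [v [v_le1 ->]]; have := mv_vnorm_le v; have := vnorm_ge0 v; nra.
apply: epsilon_spec.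
have [m m_lub] := completeness unit_image (ex_intro _ K ub) (ex_intro _ _ unit_image0).
by exists m.
Qed.

Lemma opnorm_ge0 : 0 <= opnorm H.
Proof.
apply: Rle_trans (vnorm_ge0 (mv H (fun _ => 0))) _.
exact: (proj1 opnorm_is_lub) _ unit_image0.
Qed.

Lemma opnorm_le : opnorm H <= K.
Proof.
apply: (proj2 opnorm_is_lub) => y [v [v_le1 ->]].
have := mv_vnorm_le v; have := vnorm_ge0 v; nra.
Qed.

Lemma mv_vnorm_le_opnorm v : vnorm (mv H v) <= opnorm H * vnorm v.
Proof.
have [v0|v_neq0] := Req_dec (vnorm v) 0.
  by have := mv_vnorm_le v; rewrite v0; have := vnorm_ge0 (mv H v); nra.
have v_gt0 : 0 < vnorm v by have := vnorm_ge0 v; lra.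
have inv_gt0 : 0 < / vnorm v by apply: Rinv_0_lt_compat.
have : unit_image (vnorm (mv H (vscale (/ vnorm v) v))).
  exists (vscale (/ vnorm v) v); split=> //.
  by rewrite vnorm_scale Rabs_right ?Rinv_l; lra.
move=> /(proj1 opnorm_is_lub).
rewrite mv_scale vnorm_scale Rabs_right; last lra.
move=> /(Rmult_le_compat_l _ _ _ (vnorm_ge0 v)).
by rewrite -Rmult_assoc Rinv_r //; lra.
Qed.

Lemma quad_le_opnorm v : quad H v <= opnorm H * dot v v.
Proof.
have := cauchy_schwarz v (mv H v); have := mv_vnorm_le_opnorm v.
rewrite /quad -vnorm_sq; have := vnorm_ge0 v; nra.
Qed.

End OperatorNorm.

Section Smooth.
Context {n : nat}.
Variables (f : vec n -> R) (g : vec n -> vec n).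
Hypothesis f_grad : has_gradient f g.

Lemma convex_gradient_le : convex_fun f -> forall x d, dot (g x) d <= f (vadd x d) - f x.
Proof.
move=> f_cvx x d.
have [d0|d_neq0] := Req_dec (vnorm d) 0.
  by rewrite (vnorm_eq0 d d0) dot0r vadd0; lra.
have d_gt0 : 0 < vnorm d by have := vnorm_ge0 d; lra.
apply: Rnot_lt_le => lt_slope.
set D := f (vadd x d) - f x in lt_slope.
set eps := (dot (g x) d - D) / (2 * vnorm d).
have eps_gt0 : 0 < eps by apply: Rdiv_lt_0_compat; lra.
have [del [del_gt0 f_lin]] := f_grad x eps eps_gt0.
set t := Rmin 1 (del / (2 * vnorm d)).
have t_gt0 : 0 < t by apply: Rmin_pos; [lra | apply: Rdiv_lt_0_compat; lra].
have t_le1 : t <= 1 by apply: Rmin_l.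
have td_lt : t * vnorm d < del.
  have : t <= del / (2 * vnorm d) by apply: Rmin_r.
  have -> : del / (2 * vnorm d) = del / vnorm d / 2 by field; lra.
  move=> /(Rmult_le_compat_r _ _ _ (Rlt_le _ _ d_gt0)).
  have -> : del / vnorm d / 2 * vnorm d = del / 2 by field; lra.
  lra.
(* Convexity along [x, x + d] against the first-order expansion at [x] in direction [t d]. *)
have cvx := f_cvx (vadd x d) x t (conj (Rlt_le _ _ t_gt0) t_le1).
have segment : vadd (vscale t (vadd x d)) (vscale (1 - t) x) = vadd x (vscale t d).
  by apply: functional_extensionality => i; rewrite /vadd /vscale; ring.
rewrite segment in cvx.
have := f_lin (vscale t d).
rewrite vnorm_scale Rabs_right ?dot_scaler; last lra.
have td_gt0 : 0 < t * vnorm d by nra.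
move=> /(_ (conj td_gt0 td_lt)); rewrite -Rabs_Ropp => /(Rle_trans _ _ _ (Rle_abs _)) lin_lo.
have : t * dot (g x) d <= t * D + eps * (t * vnorm d) by rewrite /D; lra.
have -> : eps * (t * vnorm d) = t * ((dot (g x) d - D) / 2) by rewrite /eps; field; lra.
nra.
Qed.

Lemma derivable_pt_lim_along x d t : 0 < vnorm d ->
  derivable_pt_lim (fun s => f (vadd x (vscale s d))) t (dot (g (vadd x (vscale t d))) d).
Proof.
move=> d_gt0 eps eps_gt0.
set y := vadd x (vscale t d).
have eps'_gt0 : 0 < eps / (2 * vnorm d) by apply: Rdiv_lt_0_compat; lra.
have [del [del_gt0 f_lin]] := f_grad y _ eps'_gt0.
have deld_gt0 : 0 < del / vnorm d by apply: Rdiv_lt_0_compat.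
exists (mkposreal _ deld_gt0) => h h_neq0 /= h_lt.
have -> : vadd x (vscale (t + h) d) = vadd y (vscale h d).
  by apply: functional_extensionality => i; rewrite /y /vadd /vscale; ring.
have abs_h : 0 < Rabs h by apply: Rabs_pos_lt.
have hd : 0 < vnorm (vscale h d) < del.
  rewrite vnorm_scale; split; first by nra.
  have -> : del = del / vnorm d * vnorm d by field; lra.
  nra.
move: (f_lin _ hd); rewrite dot_scaler vnorm_scale.
have -> : eps / (2 * vnorm d) * (Rabs h * vnorm d) = eps * Rabs h / 2 by field; lra.
move=> lin.
have -> : (f (vadd y (vscale h d)) - f y) / h - dot (g y) d
        = (f (vadd y (vscale h d)) - f y - h * dot (g y) d) / h by field.
rewrite /Rdiv Rabs_mult Rabs_inv.
apply: (Rmult_lt_reg_r (Rabs h)) => //.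
have -> : forall a, a * / Rabs h * Rabs h = a by move=> a; field; lra.
nra.
Qed.

(* Mean value theorem for [s |-> f (x + s d) - s c - L |d|^2 s^2 / 2] on [0, 1]. *)
Lemma descent_lemma L : lipschitz L g -> 0 < L ->
  forall x d, f (vadd x d) <= f x + dot (g x) d + L / 2 * dot d d.
Proof.
move=> g_lip L_gt0 x d.
have [d0|d_neq0] := Req_dec (vnorm d) 0.
  by rewrite (vnorm_eq0 d d0) !dot0r vadd0; lra.
have d_gt0 : 0 < vnorm d by have := vnorm_ge0 d; lra.
set c := dot (g x) d; set s := dot d d.
set phi := fun t => f (vadd x (vscale t d)) - (t * c + L * s / 2 * (t * t)).
set phi' := fun t =>
  dot (g (vadd x (vscale t d))) d - (1 * c + L * s / 2 * (1 * t + t * 1)).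
have phi_deriv t : 0 <= t <= 1 -> derivable_pt_lim phi t (phi' t).
  move=> _; apply: derivable_pt_lim_minus; first exact: derivable_pt_lim_along.
  apply: derivable_pt_lim_plus.
    exact: (derivable_pt_lim_scal_right id t 1 c (derivable_pt_lim_id t)).
  apply: (derivable_pt_lim_scal (fun t => t * t)).
  exact: (derivable_pt_lim_mult id id t 1 1 (derivable_pt_lim_id t) (derivable_pt_lim_id t)).
have [t [phi_mvt t_01]] := MVT_cor2 phi phi' 0 1 Rlt_0_1 phi_deriv.
have phi'_le0 : phi' t <= 0.
  have cs := cauchy_schwarz (vsub (g (vadd x (vscale t d))) (g x)) d.
  rewrite dot_subl -/c in cs.
  have lip := g_lip (vadd x (vscale t d)) x.
  have step : vsub (vadd x (vscale t d)) x = vscale t d.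
    by apply: functional_extensionality => i; rewrite /vsub /vadd /vscale; ring.
  rewrite step vnorm_scale Rabs_right in lip; last lra.
  have := vnorm_sq d; have := vnorm_ge0 (vsub (g (vadd x (vscale t d))) (g x)).
  rewrite /phi' -/s; nra.
have vscale1 : vscale 1 d = d by apply: functional_extensionality => i; rewrite /vscale; ring.
have vscale0 : vadd x (vscale 0 d) = x.
  by apply: functional_extensionality => i; rewrite /vadd /vscale; ring.
move: phi_mvt; rewrite /phi vscale1 vscale0; nra.
Qed.

End Smooth.

Lemma sqrt_ge0_lt1 {eta} : 0 <= eta < 1 -> 0 <= sqrt eta < 1.
Proof.
move=> eta01; split; first exact: sqrt_pos.
by rewrite -sqrt_1; apply: sqrt_lt_1_alt.
Qed.

(* [q] is [-Q(d)], [cs] is [c |d|^2]; the hypothesis is eta-inexactness tested at [lam d]. *)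
Lemma sqrt_eta_tradeoff eta q cs : 0 <= eta < 1 -> 0 <= q -> 0 <= cs ->
  (forall lam, 0 <= lam < 1 ->
     (1 - eta) * (lam * (1 - lam)) * cs / 2 <= q * (1 - (1 - eta) * lam)) ->
  (1 - sqrt eta) * cs <= 2 * q * (1 + sqrt eta).
Proof.
move=> eta01 q_ge0 cs_ge0 segment.
have [r_ge0 r_lt1] := sqrt_ge0_lt1 eta01.
have rr : sqrt eta * sqrt eta = eta by rewrite sqrt_sqrt; lra.
set r := sqrt eta in r_ge0 r_lt1 rr *.
have [r_gt0|r0] := Rle_lt_or_eq_dec 0 r r_ge0.
  (* The optimal choice is [lam = 1 / (1 + sqrt eta)]. *)
  have lam_pos : 0 < / (1 + r) by apply: Rinv_0_lt_compat; lra.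
  have lam_lt1 : / (1 + r) < 1 by rewrite -Rinv_1; apply: Rinv_lt_contravar; lra.
  have := segment (/ (1 + r)) (conj (Rlt_le _ _ lam_pos) lam_lt1).
  rewrite -rr.
  have -> : (1 - r * r) * (/ (1 + r) * (1 - / (1 + r))) * cs / 2
            = r * ((1 - r) * cs / (2 * (1 + r))) by field; lra.
  have -> : q * (1 - (1 - r * r) * / (1 + r)) = r * q by field; lra.
  move=> /(Rmult_le_reg_l r _ _ r_gt0) bound.
  have := Rmult_le_compat_r (2 * (1 + r)) _ _ ltac:(lra) bound.
  have -> : (1 - r) * cs / (2 * (1 + r)) * (2 * (1 + r)) = (1 - r) * cs by field; lra.
  lra.
(* For [eta = 0] let [lam] tend to [1]; it suffices to take [lam] past [2 q / cs]. *)
rewrite -r0 in rr *; apply: Rnot_lt_le => lt_cs.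
have cs_gt0 : 0 < cs by lra.
set lam := (2 * q / cs + 1) / 2.
have lam_cs : lam * cs = (2 * q + cs) / 2 by rewrite /lam; field; lra.
have q_cs : 2 * q / cs < 1.
  by apply: (Rmult_lt_reg_r cs) => //; rewrite /Rdiv Rmult_assoc Rinv_l; lra.
have q_cs0 : 0 <= 2 * q / cs.
  by apply: Rmult_le_pos; [lra | left; apply: Rinv_0_lt_compat].
have lam01 : 0 <= lam < 1 by rewrite /lam; lra.
have := segment lam lam01; rewrite -rr Rmult_0_l Rminus_0_r !Rmult_1_l => seg.
have : lam * cs / 2 <= q.
  apply: (Rmult_le_reg_l (1 - lam)); first lra.
  by move: seg; rewrite Rmult_comm; nra.
lra.
Qed.

Section Model.
Context {n : nat} {g : vec n -> vec n} {dom : vec n -> Prop} {psi : vec n -> R}.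
Context {x : vec n} {H : mat n}.
Hypothesis dom_x : dom x.

Let model_values y := exists d, dom (vadd x d) /\ y = Qmodel g psi x H d.

Lemma model_inf_le {Qs d} : is_inf model_values Qs -> dom (vadd x d) -> Qs <= Qmodel g psi x H d.
Proof. by move=> [Qs_lb _] dom_d; apply: Qs_lb; exists d. Qed.

Lemma model_inf_le0 {Qs} : is_inf model_values Qs -> Qs <= 0.
Proof.
move=> Qs_inf; have := @model_inf_le Qs (fun _ => 0) Qs_inf.
rewrite vadd0 => /(_ dom_x).
by rewrite /Qmodel vadd0 dot0r /quad dot_comm dot0r; lra.
Qed.

Lemma eta_inexact_model_le0 {eta d} : 0 <= eta < 1 ->
  eta_inexact dom g psi eta x H d -> Qmodel g psi x H d <= 0.
Proof.
move=> eta01 [_ [Qs [Qs_inf Qd_le]]].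
have := model_inf_le0 Qs_inf; nra.
Qed.

(* Convexity of [psi] on the segment [x, x + d] bounds [Q(lam d)] through [Q(d)]. *)
Lemma eta_inexact_step_bound {eta c d} : 0 <= eta < 1 -> 0 <= c -> convex_ext dom psi ->
  (forall v, c * dot v v <= quad H v) -> eta_inexact dom g psi eta x H d ->
  (1 - sqrt eta) * (c * dot d d) <= 2 * - Qmodel g psi x H d * (1 + sqrt eta).
Proof.
move=> eta01 c_ge0 psi_cvx H_ge inexact.
have Qd_le0 := eta_inexact_model_le0 eta01 inexact.
move: inexact => [dom_d [Qs [Qs_inf Qd_le]]].
apply: sqrt_eta_tradeoff => //; first lra.
  by apply: Rmult_le_pos => //; apply: dot_self_ge0.
move=> lam lam01.
have [dom_lam psi_lam] := psi_cvx (vadd x d) x lam dom_d dom_x ltac:(lra).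
have segment : vadd (vscale lam (vadd x d)) (vscale (1 - lam) x) = vadd x (vscale lam d).
  by apply: functional_extensionality => i; rewrite /vadd /vscale; ring.
rewrite segment in dom_lam psi_lam.
have := model_inf_le Qs_inf dom_lam.
rewrite /Qmodel quad_scale dot_scaler in Qd_le Qd_le0 *.
set Qd := dot (g x) d + / 2 * quad H d + psi (vadd x d) - psi x in Qd_le Qd_le0 *.
move=> Qs_le_lam.
have Qs_le : Qs <= lam * Qd - lam * (1 - lam) / 2 * (c * dot d d).
  have := H_ge d; have : 0 <= lam * (1 - lam) by nra.
  rewrite /Qd; nra.
have : 0 <= 1 - eta by lra.
nra.
Qed.

End Model.

Definition accept_threshold (L gamma eta : R) : R :=
  L * (1 + sqrt eta) / (2 - gamma * (1 - sqrt eta)).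

Section Acceptance.
Context {n : nat}.
Variables (f : vec n -> R) (g : vec n -> vec n) (L : R).
Variables (dom : vec n -> Prop) (psi : vec n -> R) (gamma eta : R).
Hypotheses (f_grad : has_gradient f g) (g_lip : lipschitz L g) (L_gt0 : 0 < L).
Hypotheses (psi_cvx : convex_ext dom psi).
Hypotheses (gamma01 : 0 < gamma <= 1) (eta01 : 0 <= eta < 1).

Lemma accept_denom_ge1 : 1 <= 2 - gamma * (1 - sqrt eta).
Proof. have := sqrt_ge0_lt1 eta01; nra. Qed.

Lemma accept_threshold_gt0 : 0 < accept_threshold L gamma eta.
Proof.
have := sqrt_ge0_lt1 eta01; have := accept_denom_ge1.
by move=> *; apply: Rdiv_lt_0_compat; nra.
Qed.

(* The descent lemma against the bound of [eta_inexact_step_bound] on [|d|^2]. *)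
Lemma accepted_of_threshold_le c (H : mat n) x d :
  accept_threshold L gamma eta <= c -> (forall v, c * dot v v <= quad H v) -> dom x ->
  eta_inexact dom g psi eta x H d -> accepted f g psi gamma x H d.
Proof.
move=> c_ge H_ge dom_x inexact.
have c_gt0 : 0 < c by have := accept_threshold_gt0; lra.
have step := eta_inexact_step_bound dom_x eta01 (Rlt_le _ _ c_gt0) psi_cvx H_ge inexact.
have Qd_le0 := eta_inexact_model_le0 dom_x eta01 inexact.
have descent := descent_lemma f g f_grad L g_lip L_gt0 x d.
have [r_ge0 r_lt1] := sqrt_ge0_lt1 eta01.
have den := accept_denom_ge1.
have dd_ge0 := dot_self_ge0 d.
have quad_ge := H_ge d.
set r := sqrt eta in step c_ge den r_ge0 r_lt1.
set Qd := Qmodel g psi x H d in step Qd_le0 *.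
have L_le : L * (1 + r) <= c * (2 - gamma * (1 - r)).
  move: c_ge; rewrite /accept_threshold -/r => c_ge.
  have -> : L * (1 + r) = L * (1 + r) / (2 - gamma * (1 - r)) * (2 - gamma * (1 - r)).
    by field; lra.
  apply: Rmult_le_compat_r; lra.
have excess : (L - c) * dot d d <= (1 - gamma) * (2 * - Qd).
  apply: (Rmult_le_reg_r (1 + r)); first lra.
  have : (L - c) * (1 + r) * dot d d <= (1 - gamma) * c * (1 - r) * dot d d.
    by apply: Rmult_le_compat_r => //; nra.
  have : 0 <= 1 - gamma by lra.
  nra.
rewrite /accepted -/Qd; split; last by nra.
move: descent; rewrite /Qd /Qmodel in excess Qd_le0 *; nra.
Qed.

End Acceptance.

(* [trial_mat var beta (mscale m (idmat n)) i = mscale (trial_coef var beta m i) (idmat n)]. *)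
Definition trial_coef (var : variant) (beta m : R) (i : nat) : R :=
  match var with
  | Variant1 => / beta ^ i * m
  | Variant2 => match i with O => m | S j => m + / beta ^ j end
  end.

Definition trial_norm_bound (var : variant) (beta m0 M0 : R) (i : nat) : R :=
  Rmax (Rabs (trial_coef var beta m0 i)) (Rabs (trial_coef var beta M0 i)).

Lemma inv_pow_gt0 beta j : 0 < beta -> 0 < / beta ^ j.
Proof. by move=> beta_gt0; apply/Rinv_0_lt_compat/pow_lt. Qed.

Lemma inv_pow_ge1 beta j : 0 < beta <= 1 -> 1 <= / beta ^ j.
Proof.
move=> beta01; rewrite -Rinv_1; apply: Rinv_le_contravar; first by apply: pow_lt; lra.
by rewrite -(pow1 j); apply: pow_incr; lra.
Qed.

Lemma trial_coef_gt0 var beta M i : 0 < beta -> 0 < M -> 0 < trial_coef var beta M i.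
Proof.
move=> beta_gt0 M_gt0; have := inv_pow_gt0 beta i beta_gt0.
case: var => /=; first nra.
by case: i => [|j] //= _; have := inv_pow_gt0 beta j beta_gt0; lra.
Qed.

Lemma trial_norm_bound_gt0 var beta m0 M0 i : 0 < beta -> 0 < M0 ->
  0 < trial_norm_bound var beta m0 M0 i.
Proof.
move=> beta_gt0 M0_gt0; apply: Rlt_le_trans (Rmax_r _ _).
by have := trial_coef_gt0 var beta M0 i beta_gt0 M0_gt0; split_Rabs; lra.
Qed.

Section TrialMatrices.
Context {n : nat}.
Variables (var : variant) (beta m0 M0 : R) (H0 : mat n).
Hypotheses (beta_gt0 : 0 < beta) (H0_sym : msym H0).
Hypotheses (H0_ge : loewner_le (mscale m0 (idmat n)) H0).
Hypotheses (H0_le : loewner_le H0 (mscale M0 (idmat n))).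

Lemma trial_mat_sym i : msym (trial_mat var beta H0 i).
Proof.
case: var => /=; first exact: msym_mscale.
by case: i => [|j] //; apply: msym_madd => //; apply/msym_mscale/msym_idmat.
Qed.

Lemma trial_mat_quad_bounds i v :
  trial_coef var beta m0 i * dot v v <= quad (trial_mat var beta H0 i) v
  <= trial_coef var beta M0 i * dot v v.
Proof.
have := H0_ge v; have := H0_le v; rewrite !quad_mscale !quad_idmat => le_M0 ge_m0.
case: var => /=.
  by rewrite quad_mscale; have := inv_pow_gt0 beta i beta_gt0; split; nra.
case: i => [|j]; first by lra.
by rewrite quad_madd quad_mscale quad_idmat; have := inv_pow_gt0 beta j beta_gt0; lra.
Qed.

Lemma trial_quad_abs_le i v :
  Rabs (quad (trial_mat var beta H0 i) v) <= trial_norm_bound var beta m0 M0 i * dot v v.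
Proof.
have [lo hi] := trial_mat_quad_bounds i v; have vv := dot_self_ge0 v.
have := Rmax_l (Rabs (trial_coef var beta m0 i)) (Rabs (trial_coef var beta M0 i)).
have := Rmax_r (Rabs (trial_coef var beta m0 i)) (Rabs (trial_coef var beta M0 i)).
rewrite /trial_norm_bound; split_Rabs; nra.
Qed.

Hypothesis M0_gt0 : 0 < M0.

Lemma opnorm_trial_spec i :
  let T := trial_mat var beta H0 i in
  [/\ 0 <= opnorm T, opnorm T <= trial_norm_bound var beta m0 M0 i
    & forall v, quad T v <= opnorm T * dot v v].
Proof.
have K_gt0 := trial_norm_bound_gt0 var beta m0 M0 i beta_gt0 M0_gt0.
have T_sym := trial_mat_sym i; have T_abs := trial_quad_abs_le i.
split; [exact: opnorm_ge0 T_sym K_gt0 T_abs | exact: opnorm_le T_sym K_gt0 T_abs |].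
by move=> v; apply: quad_le_opnorm T_sym K_gt0 T_abs v.
Qed.

End TrialMatrices.

Lemma Rmax_abs_le a b K : - K <= a <= K -> - K <= b <= K -> Rmax (Rabs a) (Rabs b) <= K.
Proof. by move=> *; apply: Rmax_lub; apply: Rabs_le; lra. Qed.

Section TrialBounds.
Variables (beta m0 M0 T : R) (nb : nat).
Hypotheses (beta01 : 0 < beta < 1) (m0_le : m0 <= M0) (M0_gt0 : 0 < M0) (T_gt0 : 0 < T).

(* The last rejected trial [nb - 1] has coefficient below [T]; the accepted one is [1/beta]
   times it. *)
Lemma trial_norm_bound_variant1 : 0 < m0 ->
  (forall i, (i < nb)%nat -> trial_coef Variant1 beta m0 i < T) ->
  trial_norm_bound Variant1 beta m0 M0 nb <= M0 * Rmax 1 (T / (beta * m0)).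
Proof.
move=> m0_gt0 rejected; have R1 := Rmax_l 1 (T / (beta * m0)).
rewrite /trial_norm_bound /=.
case: nb rejected => [|j] rejected /=.
  by rewrite Rinv_1 !Rmult_1_l; apply: Rmax_abs_le; nra.
have := rejected j (ltnSn j); rewrite /= => coef_lt.
have inv_gt0 := inv_pow_gt0 beta j (proj1 beta01).
have binv_gt0 : 0 < / beta by apply: Rinv_0_lt_compat; lra.
rewrite Rinv_mult.
have coef_le : / beta * / beta ^ j <= T / (beta * m0).
  have -> : T / (beta * m0) = / beta * (T / m0) by field; lra.
  apply: Rmult_le_compat_l; first lra.
  apply: (Rmult_le_reg_r m0) => //.
  have -> : T / m0 * m0 = T by field; lra.
  lra.
have := Rmax_r 1 (T / (beta * m0)).
have : 0 < / beta * / beta ^ j by nra.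
by move=> *; apply: Rmax_abs_le; nra.
Qed.

Lemma trial_norm_bound_variant2 :
  (forall i, (i < nb)%nat -> trial_coef Variant2 beta m0 i < T) ->
  trial_norm_bound Variant2 beta m0 M0 nb <= M0 + Rmax 1 (/ beta * (T - m0)).
Proof.
move=> rejected.
have R1 := Rmax_l 1 (/ beta * (T - m0)); have R2 := Rmax_r 1 (/ beta * (T - m0)).
have binv_gt1 : 1 < / beta by rewrite -Rinv_1; apply: Rinv_lt_contravar; lra.
have T_m0 : m0 <= T -> T - m0 <= / beta * (T - m0) by move=> ?; nra.
rewrite /trial_norm_bound /=.
case: nb rejected => [|[|j]] rejected /=.
- by apply: Rmax_abs_le; lra.
- by rewrite Rinv_1; apply: Rmax_abs_le; lra.
have := rejected j.+1 (ltnSn _); rewrite /= => coef_lt.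
have inv_ge1 := inv_pow_ge1 beta j (conj (proj1 beta01) (Rlt_le _ _ (proj2 beta01))).
rewrite Rinv_mult.
have : / beta * / beta ^ j < / beta * (T - m0) by apply: Rmult_lt_compat_l; lra.
have : 0 < / beta * / beta ^ j by nra.
by move=> *; apply: Rmax_abs_le; lra.
Qed.

End TrialBounds.

Section LinearRate.
Context {n : nat}.
Variables (f : vec n -> R) (g : vec n -> vec n) (dom : vec n -> Prop) (psi : vec n -> R).
Variables (Fstar mu : R) (P : vec n -> vec n).
Hypotheses (f_grad : has_gradient f g) (f_cvx : convex_fun f) (mu_gt0 : 0 < mu).
Hypothesis P_opt : forall z, dom (P z) /\ f (P z) + psi (P z) = Fstar.
Hypothesis F_osc : forall z lam, dom z -> 0 <= lam <= 1 ->
  let w := vadd (vscale lam z) (vscale (1 - lam) (P z)) in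
  dom w /\
  f w + psi w <= lam * (f z + psi z) + (1 - lam) * Fstar
                 - mu * lam * (1 - lam) / 2 * (vnorm (vsub z (P z))) ^ 2.
Variables (z : vec n) (H : mat n) (Qs : R).
Hypotheses (dom_z : dom z)
  (Qs_inf : is_inf (fun y => exists d, dom (vadd z d) /\ y = Qmodel g psi z H d) Qs).

(* Test the model at [lam (P z - z)] with [lam = mu / (mu + N)], which balances the
   curvature term of the model against the strong convexity term. *)
Lemma model_inf_le_osc N : 0 <= N -> (forall v, quad H v <= N * dot v v) ->
  Qs <= - (mu / (mu + N)) * (f z + psi z - Fstar).
Proof.
move=> N_ge0 H_le.
set lam := mu / (mu + N); set e := vsub (P z) z.
have lam_gt0 : 0 < lam by apply: Rdiv_lt_0_compat; lra.
have lam_N : lam * (mu + N) = mu by rewrite /lam; field; lra.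
have lam_le1 : lam <= 1 by nra.
have [dom_w Fw_le] := F_osc z (1 - lam) dom_z ltac:(lra).
have w_eq : vadd (vscale (1 - lam) z) (vscale (1 - (1 - lam)) (P z)) = vadd z (vscale lam e).
  by apply: functional_extensionality => i; rewrite /vadd /vscale /e /vsub; ring.
have e_sq : vnorm (vsub z (P z)) ^ 2 = dot e e.
  by rewrite /= Rmult_1_r vnorm_sq /e !dot_subl !dot_subr (dot_comm (P z) z); ring.
rewrite w_eq e_sq in dom_w Fw_le.
have := model_inf_le Qs_inf dom_w.
have := convex_gradient_le f g f_grad f_cvx z (vscale lam e).
have := H_le (vscale lam e); rewrite /Qmodel !quad_scale dot_scalel dot_scaler.
have : N * (lam * (lam * dot e e)) = lam * (mu - lam * mu) * dot e e.
  have lamN : lam * N = mu - lam * mu by lra.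
  by rewrite -lamN; ring.
lra.
Qed.

Lemma model_inf_le_half_gap :
  quad H (vsub z (P z)) <= f z + psi z - Fstar -> Qs <= - / 2 * (f z + psi z - Fstar).
Proof.
move=> quad_le_gap; set e := vsub (P z) z.
have z_e : vadd z e = P z by apply: functional_extensionality => i; rewrite /vadd /e /vsub; ring.
have [dom_P F_P] := P_opt z.
have := model_inf_le Qs_inf (ltac:(rewrite z_e; exact: dom_P) : dom (vadd z e)).
have := convex_gradient_le f g f_grad f_cvx z e.
have quad_e : quad H e = quad H (vsub z (P z)).
  rewrite (_ : e = vscale (-1) (vsub z (P z))) ?quad_scale; first ring.
  by apply: functional_extensionality => i; rewrite /vscale /e /vsub; ring.
rewrite /Qmodel z_e quad_e; lra.
Qed.

Lemma accepted_gap_decrease gamma eta d a : 0 < gamma -> 0 <= eta < 1 ->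
  accepted f g psi gamma z H d -> Qmodel g psi z H d <= (1 - eta) * Qs ->
  Qs <= - a * (f z + psi z - Fstar) ->
  f (vadd z d) + psi (vadd z d) - Fstar
    <= (1 - gamma * (1 - eta) * a) * (f z + psi z - Fstar).
Proof.
move=> gamma_gt0 eta01 [decrease _] Qd_le Qs_le.
have : (1 - eta) * Qs <= (1 - eta) * (- a * (f z + psi z - Fstar)).
  by apply: Rmult_le_compat_l; lra.
move=> /(Rle_trans _ _ _ Qd_le) /(Rmult_le_compat_l gamma _ _ (Rlt_le _ _ gamma_gt0)).
lra.
Qed.

End LinearRate.

Lemma linear_rate_antimono gamma mu eta N M : 0 < gamma -> 0 < mu -> 0 <= eta < 1 ->
  0 <= N -> N <= M ->
  1 - gamma * (mu * (1 - eta) / (mu + N)) <= 1 - gamma * (mu * (1 - eta) / (mu + M)).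
Proof.
move=> gamma_gt0 mu_gt0 eta01 N_ge0 N_le.
have inv_le : / (mu + M) <= / (mu + N) by apply: Rinv_le_contravar; lra.
have := Rmult_le_compat_l (mu * (1 - eta)) _ _ ltac:(nra) inv_le.
move=> /(Rmult_le_compat_l gamma _ _ (Rlt_le _ _ gamma_gt0)).
rewrite /Rdiv; lra.
Qed.

Lemma Mtilde1_threshold M0 m0 L beta gamma eta : 0 < beta -> 0 < m0 ->
  0 < 2 - gamma * (1 - sqrt eta) ->
  Mtilde1 M0 m0 L beta gamma eta = M0 * Rmax 1 (accept_threshold L gamma eta / (beta * m0)).
Proof.
move=> beta_gt0 m0_gt0 den_gt0; rewrite /Mtilde1 /accept_threshold.
by congr (_ * Rmax 1 _); field; lra.
Qed.

Lemma rejected_trial_coef_lt {n} {f : vec n -> R} {g L dom psi gamma eta}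
    {var beta m0 M0} {H0 : mat n} {x i d} :
  has_gradient f g -> lipschitz L g -> 0 < L -> convex_ext dom psi ->
  0 < gamma <= 1 -> 0 <= eta < 1 -> 0 < beta ->
  loewner_le (mscale m0 (idmat n)) H0 -> loewner_le H0 (mscale M0 (idmat n)) -> dom x ->
  eta_inexact dom g psi eta x (trial_mat var beta H0 i) d ->
  ~ accepted f g psi gamma x (trial_mat var beta H0 i) d ->
  trial_coef var beta m0 i < accept_threshold L gamma eta.
Proof.
move=> f_grad g_lip L_gt0 psi_cvx gamma01 eta01 beta_gt0 H0_ge H0_le dom_x inexact rejected.
apply: Rnot_le_lt => threshold_le; apply: rejected.
apply: (accepted_of_threshold_le f g L dom psi gamma eta) threshold_le _ dom_x inexact => //.
by move=> v; case: (trial_mat_quad_bounds var beta m0 M0 H0 beta_gt0 H0_ge H0_le i v).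
Qed.

Theorem theorem3
  (n : nat) (f : vec n -> R) (gradf : vec n -> vec n) (L : R)
  (dom : vec n -> Prop) (psi : vec n -> R)
  (Fstar : R) (P : vec n -> vec n) (mu : R)
  (var : variant) (beta gamma eta m0 M0 : R)
  (H0 : nat -> mat n) (x : nat -> vec n)
  (nb : nat -> nat) (D : nat -> nat -> vec n)
  (* Assumption 1 *)
  (HL : 0 < L) (Hgrad : has_gradient f gradf) (HLip : lipschitz L gradf)
  (Hpsi_conv : convex_ext dom psi) (Hpsi_prop : proper_ext dom)
  (Hpsi_closed : closed_ext dom psi)
  (Hbdd : exists b, forall z, dom z -> b <= f z + psi z)
  (HFstar : is_inf (fun y => exists z, dom z /\ y = f z + psi z) Fstar)
  (HOmega : exists z, dom z /\ f z + psi z = Fstar)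
  (* P is the Euclidean projection onto Omega = {z | F z = F^*} *)
  (HP : forall z, (dom (P z) /\ f (P z) + psi (P z) = Fstar) /\
          forall y, dom y -> f y + psi y = Fstar -> vnorm (vsub z (P z)) <= vnorm (vsub z y))
  (* f convex, F mu-optimal-set-strongly convex with mu > 0 *)
  (Hfconv : convex_fun f)
  (Hmu : 0 < mu)
  (Hosc : forall z lam, dom z -> 0 <= lam <= 1 ->
      let w := vadd (vscale lam z) (vscale (1 - lam) (P z)) in
      dom w /\
      f w + psi w <= lam * (f z + psi z) + (1 - lam) * Fstar
                     - mu * lam * (1 - lam) / 2 * (vnorm (vsub z (P z))) ^ 2)
  (* algorithm parameters *)
  (Hbeta : 0 < beta < 1) (Hgamma : 0 < gamma <= 1) (Heta : 0 <= eta < 1)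
  (* initial matrices *)
  (HM0 : 0 < M0) (Hm0M0 : m0 <= M0)
  (Hm0pos : var = Variant1 -> 0 < m0)
  (HH0sym : forall k, msym (H0 k))
  (HH0pd : forall k, var = Variant1 -> pd (H0 k))
  (HH0low : forall k, loewner_le (mscale m0 (idmat n)) (H0 k))
  (HH0up : forall k, loewner_le (H0 k) (mscale M0 (idmat n)))
  (* trace of Algorithm 2: at iteration k, trials i = 0..nb k with directions D k i *)
  (Hx0 : dom (x 0%nat))
  (Hinex : forall k i, (i <= nb k)%nat ->
      eta_inexact dom gradf psi eta (x k) (trial_mat var beta (H0 k) i) (D k i))
  (Hfail : forall k i, (i < nb k)%nat ->
      ~ accepted f gradf psi gamma (x k) (trial_mat var beta (H0 k) i) (D k i))
  (Hacc : forall k,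
      accepted f gradf psi gamma (x k) (trial_mat var beta (H0 k) (nb k)) (D k (nb k)))
  (Hstep : forall k, x (S k) = vadd (x k) (D k (nb k))) :
  forall k : nat,
    let Hk := trial_mat var beta (H0 k) (nb k) in
    let Fk := f (x k) + psi (x k) in
    let Fk1 := f (x (S k)) + psi (x (S k)) in
    let rate := 1 - gamma * (mu * (1 - eta) / (mu + opnorm Hk)) in
    Fk1 - Fstar <= rate * (Fk - Fstar)
    /\ (var = Variant1 ->
          rate <= 1 - gamma * (mu * (1 - eta) / (mu + Mtilde1 M0 m0 L beta gamma eta)))
    /\ (var = Variant2 ->
          rate <= 1 - gamma * (mu * (1 - eta) / (mu + Mtilde2 M0 m0 L beta gamma eta)))
    /\ (Fk - Fstar >= quad Hk (vsub (x k) (P (x k))) -> psd Hk ->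
          Fk1 - Fstar <= (1 - (1 - eta) * gamma / 2) * (Fk - Fstar)).
Proof.
move=> k; cbv zeta.
have dom_x : forall j, dom (x j).
  by elim=> [|j IH] //; rewrite Hstep; exact: (proj1 (Hinex j (nb j) (leqnn _))).
have rejected i : (i < nb k)%nat -> trial_coef var beta m0 i < accept_threshold L gamma eta.
  move=> lt_i; apply: (rejected_trial_coef_lt Hgrad HLip HL Hpsi_conv Hgamma Heta (proj1 Hbeta)
    (HH0low k) (HH0up k) (dom_x k) (Hinex k i (ltnW lt_i)) (Hfail k i lt_i)).
have [N_ge0 N_le Hk_le] := opnorm_trial_spec var beta m0 M0 (H0 k) (proj1 Hbeta) (HH0sym k)
  (HH0low k) (HH0up k) HM0 (nb k).
set Hk := trial_mat var beta (H0 k) (nb k) in N_ge0 N_le Hk_le *.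
have [_ [Qs [Qs_inf Qd_le]]] := Hinex k (nb k) (leqnn _).
have decrease := accepted_gap_decrease f gradf psi Fstar (x k) Hk Qs gamma eta (D k (nb k))
  _ (proj1 Hgamma) Heta (Hacc k) Qd_le.
have den := accept_denom_ge1 gamma eta Hgamma Heta.
rewrite Hstep; split; [|split; [|split]].
- have := decrease _ (model_inf_le_osc f gradf dom psi Fstar mu P Hgrad Hfconv Hmu Hosc
    (x k) Hk Qs (dom_x k) Qs_inf _ N_ge0 Hk_le).
  by rewrite /Rdiv -!Rmult_assoc (Rmult_comm _ mu); lra.
- move=> var1; apply: linear_rate_antimono => //; try lra.
  rewrite Mtilde1_threshold; try lra; last exact: Hm0pos.
  apply: Rle_trans N_le _; move: rejected; rewrite var1 => rejected.
  exact: trial_norm_bound_variant1 (Hm0pos var1) rejected.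
- move=> var2; apply: linear_rate_antimono => //; try lra.
  apply: Rle_trans N_le _; move: rejected; rewrite var2 => rejected.
  have T_gt0 := accept_threshold_gt0 L gamma eta HL Hgamma Heta.
  exact: trial_norm_bound_variant2 Hbeta Hm0M0 HM0 T_gt0 rejected.
- move=> gap_ge _.
  have := decrease _ (model_inf_le_half_gap f gradf dom psi Fstar P Hgrad Hfconv
    (fun z => proj1 (HP z)) (x k) Hk Qs Qs_inf ltac:(lra)).
  lra.
Qed.
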